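(* Let $R$ be the holistic system robustness random variable (defined in the context), with distribution $\pi_R$, so that $\mathbb{P}_{\pi_R}[-R\le a]=1$. Let $\alpha\in(0,1]$ and define \[ L(x,\mu,t)=t\left(\mu+e^{\frac{x}{t}-\mu-\ln(\alpha)-1}\right),\qquad u_b(\mu,t)=L(a,\mu,t). \] For $N$ independent samples $r_1,\dots,r_N$ of $R$, let $\zeta^*_N(\mu,t)=\max_{1\le k\le N}L(-r_k,\mu,t)$. Then for all $\epsilon\in[0,1]$, \[ \mathbb{P}^N_{\pi_R}\left[r^*_E\triangleq\inf_{\mu\in\mathbb{R},\ t>0}\zeta^*_N(\mu,t)(1-\epsilon)+u_b(\mu,t)\epsilon\ \ge\ \mathrm{EVaR}_\alpha(-R)\right]\ge 1-(1-\epsilon)^N. \]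
   Context: System setting: $\dot x = f(x,u)+\xi$, $x\in\mathcal{X}\subset\mathbb{R}^n$, $u=U(x,\theta)\in\mathcal{U}\subset\mathbb{R}^m$, $\theta\in\Theta\subset\mathbb{R}^p$ a parameter fixed along a trajectory, and $\xi$ stochastic noise with unknown distribution $\pi_\xi(x,u,t)$. $x^\theta$ denotes the resulting closed-loop state signal in $\mathcal{S}=\{s:\mathbb{R}_{\ge0}\to\mathbb{R}^n\}$ from an initial condition $x_0\in\mathcal{X}_0\subseteq\mathcal{X}$. A robustness metric is a function $\rho:\mathcal{S}\to[-a,b]$ with $a,b>0$ such that $\rho(s)\ge0$ only for signals exhibiting desired properties. The holistic system robustness $R$ is the scalar random variable whose samples are $r=\rho(x^\theta)$, where $(x_0,\theta)$ is sampled uniformly from $\mathcal{X}_0\times\Theta$. Entropic-Value-at-Risk: $\mathrm{EVaR}_\alpha(Z)=\inf_{z>0}\frac1z\ln\left(\frac{\mathbb{E}[e^{zZ}]}{\alpha}\right)$. $\zeta^*_N(\mu,t)$ is the solution of $\min_\zeta\zeta$ s.t. $\zeta\ge L(-r_i,\mu,t)$ for all $i$; $\mathbb{P}^N_{\pi_R}$ is the $N$-fold product measure of the i.i.d. sample. *)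

From HB Require Import structures.
From mathcomp Require Import all_boot all_order all_algebra.
From mathcomp Require Import all_classical all_reals all_analysis.
Set Implicit Arguments. Unset Strict Implicit. Unset Printing Implicit Defensive.
Import Order.TTheory GRing.Theory Num.Theory.
Import numFieldNormedType.Exports.
Local Open Scope classical_set_scope.
Local Open Scope ring_scope.

Definition EVaR d (Omega : measurableType d) (R : realType)
  (P : probability Omega R) (alpha : R) (Z : Omega -> R) : \bar R :=
  ereal_inf [set ((z^-1 * ln (fine (\int[P]_w (expR (z * Z w))%:E) / alpha))%:E)%E
            | z in `]0, +oo[%classic].

Definition Lfun (R : realType) (alpha x mu t : R) : R :=
  t * (mu + expR (x / t - mu - ln alpha - 1)).

Definition ub (R : realType) (alpha a mu t : R) : R := Lfun alpha a mu t.

(* zeta*_N(mu,t) = max_{1<=k<=N} L(-r_k, mu, t)  (computed in \bar R with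
   bottom -oo; for N >= 1 this is the finite maximum) *)
Definition zeta_star (R : realType) (N : nat) (alpha : R) (r : 'I_N -> R)
  (mu t : R) : R :=
  fine (\big[Order.max/-oo%E]_(k < N) ((Lfun alpha (- r k) mu t)%:E))%E.

Definition rstarE (R : realType) (N : nat) (alpha a eps : R) (r : 'I_N -> R)
  : \bar R :=
  ereal_inf [set x | exists mu t : R, 0 < t /\
     x = (zeta_star alpha r mu t * (1 - eps) + ub alpha a mu t * eps)%:E].

(* mutual independence of a finite family of real random variables:
   the product rule for every family of Borel sets (taking A i = setT
   recovers every subfamily) *)
Definition mutually_independent d (Omega : measurableType d) (R : realType)
  (P : probability Omega R) (N : nat) (X : 'I_N -> Omega -> R) : Prop :=
  forall A : 'I_N -> set R, (forall i, measurable (A i)) ->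
    P (\bigcap_(i in [set: 'I_N]) (X i @^-1` A i)) =
    (\prod_(i < N) P (X i @^-1` A i))%E.

Definition same_law d (Omega : measurableType d) (R : realType)
  (P : probability Omega R) (X Y : Omega -> R) : Prop :=
  forall A : set R, measurable A -> P (X @^-1` A) = P (Y @^-1` A).

From Pilot Require Import Defs.
From HB Require Import structures.
From mathcomp Require Import all_boot all_order all_algebra.
From mathcomp Require Import all_classical all_reals all_analysis.
From mathcomp Require Import ring lra measurable_realfun.
Set Implicit Arguments. Unset Strict Implicit. Unset Printing Implicit Defensive.
Import Order.TTheory GRing.Theory Num.Theory.
Import numFieldNormedType.Exports.
Local Open Scope classical_set_scope.
Local Open Scope ring_scope.

(* Pick p with P(R > p) <= 1 - eps and P(R < p) <= eps; as -R <= a almost surely,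
   such a p is >= -a.  Splitting the expectation along {R < p} gives
   E[exp(-R/t)] <= (1 - eps) exp(-p/t) + eps exp(a/t), and the bound
   ln y <= mu + y exp(-mu - 1) turns this into
   EVaR(-R) <= L(x, mu, t) (1 - eps) + u_b(mu, t) eps for every x >= -p.
   The objective of r*_E is nondecreasing in the worst sample max_k (-r_k), so
   EVaR(-R) <= r*_E as soon as some sample r_k is <= p; by independence all N
   samples exceed p with probability P(R > p)^N <= (1 - eps)^N.  For eps = 1
   every p works and no quantile is needed. *)

Lemma ln_le_affine_expR (R : realType) (c y : R) : 0 < y ->
  ln y <= c + y * expR (- c - 1).
Proof.
move=> y0; have := expR_ge1Dx (ln y - c - 1).
rewrite (_ : ln y - c - 1 = ln y + (- c - 1)); last by ring.
rewrite expRD lnK ?posrE//; lra.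
Qed.

(* Unqualified [Lfun] would resolve to the L^p spaces of mathcomp-analysis. *)
Section Lfun_bounds.
Variables (R : realType) (alpha : R).

Lemma ler_Lfun (mu t x y : R) : 0 < t -> x <= y ->
  Defs.Lfun alpha x mu t <= Defs.Lfun alpha y mu t.
Proof.
move=> t0 xy; rewrite /Defs.Lfun ler_pM2l// lerD2l ler_expR !lerD2r.
by rewrite ler_pM2r ?invr_gt0.
Qed.

Lemma Lfun_mixE (a eps x mu t : R) : 0 < alpha -> 0 < t ->
  Defs.Lfun alpha x mu t * (1 - eps) + Defs.Lfun alpha a mu t * eps =
  t * (mu + ((1 - eps) * expR (t^-1 * x) + eps * expR (t^-1 * a)) / alpha
            * expR (- mu - 1)).
Proof.
move=> alpha0 t0; have expE z : expR (z / t - mu - ln alpha - 1) =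
    expR (t^-1 * z) / alpha * expR (- mu - 1).
  have -> : alpha^-1 = expR (- ln alpha) by rewrite expRN lnK ?posrE.
  by rewrite -!expRD; congr expR; ring.
by rewrite /Defs.Lfun !expE; ring.
Qed.

Lemma ln_le_Lfun_mix (a eps x mu t J : R) : 0 < alpha -> 0 < t -> 0 < J ->
  J <= (1 - eps) * expR (t^-1 * x) + eps * expR (t^-1 * a) ->
  t * ln (J / alpha) <= Defs.Lfun alpha x mu t * (1 - eps) + ub alpha a mu t * eps.
Proof.
move=> alpha0 t0 J0 leJ; rewrite /ub Lfun_mixE// ler_pM2l//.
have Jalpha0 : 0 < J / alpha by rewrite divr_gt0.
apply: le_trans (ln_le_affine_expR mu Jalpha0) _.
by rewrite lerD2l ler_pM2r ?expR_gt0// ler_pM2r ?invr_gt0.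
Qed.

End Lfun_bounds.

(* r*_E as a function of the worst sample value x = max_k (- r_k). *)
Definition rstar_at (R : realType) (alpha a eps x : R) : \bar R :=
  ereal_inf [set y | exists mu t : R, 0 < t /\
     y = (Defs.Lfun alpha x mu t * (1 - eps) + ub alpha a mu t * eps)%:E].

Lemma zeta_star_argmin (R : realType) n (alpha : R) (r : 'I_n.+1 -> R) j (mu t : R) :
  (forall k, r j <= r k) -> 0 < t ->
  zeta_star alpha r mu t = Defs.Lfun alpha (- r j) mu t.
Proof.
move=> rj t0; rewrite /zeta_star.
rewrite (_ : \big[_/_]_(k < n.+1) _ = (Defs.Lfun alpha (- r j) mu t)%:E)%E//.
apply/le_anti/andP; split.
  apply: bigmax_le => [|k _]; first exact: leNye.
  by rewrite lee_fin ler_Lfun// lerN2.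
exact: (le_bigmax _ (fun k => (Defs.Lfun alpha (- r k) mu t)%:E) j).
Qed.

Section rstarE_worst_sample.
Variables (R : realType) (alpha a eps : R).
Hypothesis eps_le1 : eps <= 1.

Lemma rstar_at_homo : {homo rstar_at alpha a eps : x y / x <= y >-> (x <= y)%E}.
Proof.
move=> x y xy; apply: le_ereal_inf_tmp => _ [mu [t [t0 ->]]].
apply: le_trans (ereal_inf_lbound _) _; first by exists mu, t.
by rewrite lee_fin lerD2r ler_wpM2r ?subr_ge0// ler_Lfun.
Qed.

Lemma rstarE_argmin n (r : 'I_n.+1 -> R) j : (forall k, r j <= r k) ->
  rstarE alpha a eps r = rstar_at alpha a eps (- r j).
Proof.
move=> rj; congr ereal_inf; apply/seteqP; split=> _ [mu [t [t0 ->]]];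
  by exists mu, t; rewrite (zeta_star_argmin _ _ rj t0).
Qed.

Lemma le_rstarE n (c : \bar R) (r : 'I_n.+1 -> R) :
  (c <= rstarE alpha a eps r)%E <-> exists k, (c <= rstar_at alpha a eps (- r k))%E.
Proof.
have [j _ rj] := @arg_minP _ _ _ ord0 xpredT r isT.
rewrite (rstarE_argmin (fun k => rj k isT)); split=> [|[k ck]]; first by exists j.
by apply: le_trans ck _; apply: rstar_at_homo; rewrite lerN2 rj.
Qed.

Lemma measurable_le_rstar_at (c : \bar R) :
  measurable [set y | (c <= rstar_at alpha a eps (- y))%E].
Proof.
apply: is_interval_measurable => x y _ cy z /andP[_ zy].
by apply: le_trans cy _; apply: rstar_at_homo; rewrite lerN2.
Qed.

Lemma le_rstarE_bigcup (T : Type) n (c : \bar R) (X : 'I_n.+1 -> T -> R) :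
  [set w | (c <= rstarE alpha a eps (fun k => X k w))%E] =
  \bigcup_(k in setT) X k @^-1` [set y | (c <= rstar_at alpha a eps (- y))%E].
Proof.
apply/seteqP; split=> w; first by move=> /le_rstarE [k ck]; exists k.
by move=> [k _ ck]; apply/le_rstarE; exists k.
Qed.

End rstarE_worst_sample.

Lemma nondecreasing_bigcup_measure_le d (T : measurableType d) (R : realType)
    (mu : {measure set T -> \bar R}) (F : (set T)^nat) (c : \bar R) :
  (forall n, measurable (F n)) -> nondecreasing_seq F ->
  (forall n, (mu (F n) <= c)%E) -> (mu (\bigcup_n F n) <= c)%E.
Proof.
move=> mF ndF Fc; apply: (cvge_to_le (nondecreasing_cvg_mu mF _ ndF)).
- exact: bigcupT_measurable.
- exact: nearW.
Qed.

Section probability_facts.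
Context d (Omega : measurableType d) (R : realType) (P : probability Omega R).
Local Open Scope ereal_scope.

Lemma probability1_ae (A : set Omega) : measurable A -> P A = 1 ->
  {ae P, forall w, A w}.
Proof.
move=> mA PA; exists (~` A); split => //; first exact: measurableC.
by rewrite probability_setC// PA subee.
Qed.

Lemma probability_integral_gt0 (f : Omega -> R) : measurable_fun setT f ->
  (forall w, 0 < f w)%R -> 0 < \int[P]_w (f w)%:E.
Proof.
move=> mf f0; rewrite lt0e integral_ge0 ?andbT; last first.
  by move=> w _; rewrite lee_fin ltW.
apply/eqP => int0.
have /ae_eq_integral_abs : \int[P]_w `|(f w)%:E| = 0.
  by rewrite -int0; apply: eq_integral => w _; rewrite gee0_abs// lee_fin ltW.
move=> /(_ measurableT) []; first exact/measurable_EFinP.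
move=> N [_ PN0 fN]; suff NT : N = setT.
  have := probability_setT P; rewrite -NT PN0 => /eqP.
  by rewrite eqe eq_sym oner_eq0.
apply/seteqP; split=> // w _; apply: fN => /(_ I) /eqP.
by rewrite eqe gt_eqF.
Qed.

End probability_facts.

Section quantile.
Context d (Omega : measurableType d) (R : realType) (P : probability Omega R).
Variable Y : {RV P >-> R}.
Local Open Scope ereal_scope.

Let ccdf_le (c : R) := [set x | ccdf Y x <= c%:E].

Lemma ccdf_le_inf (c : R) : has_inf (ccdf_le c) -> ccdf Y (inf (ccdf_le c)) <= c%:E.
Proof.
move=> infS; set p := inf _; rewrite /ccdf.
have -> : `]p, +oo[%classic = \bigcup_n `](p + n.+1%:R^-1)%R, +oo[%classic.
  apply/seteqP; split=> x /=; rewrite in_itv/= andbT.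
    by move=> /ltr_add_invr[n pnx]; exists n => //=; rewrite in_itv/= pnx.
  by move=> [n _ /=]; rewrite in_itv/= andbT; apply: le_lt_trans; rewrite lerDl.
apply: nondecreasing_bigcup_measure_le => [n|n m nm|n].
- exact: measurable_itv.
- apply/subsetPset; apply: subset_itvr.
  by rewrite bnd_simp lerD2l lef_pV2 ?posrE// ler_nat ltnS.
- have n_gt0 : (0 < n.+1%:R^-1 :> R)%R by rewrite invr_gt0.
  have [s Ss ltsp] := inf_adherent n_gt0 infS.
  change (ccdf Y (p + n.+1%:R^-1)%R <= c%:E).
  by apply: le_trans Ss; apply: ccdf_nonincreasing; apply: ltW.
Qed.

Lemma distribution_lt_inf_ccdf_le (c : R) : has_inf (ccdf_le c) ->
  distribution P Y `]-oo, inf (ccdf_le c)[ <= (1 - c)%:E.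
Proof.
move=> infS; set p := inf _.
have -> : `]-oo, p[%classic = \bigcup_n `]-oo, (p - n.+1%:R^-1)%R]%classic.
  apply/seteqP; split=> x /=; rewrite in_itv/=.
    by move=> /ltr_add_invr[n pnx]; exists n => //=; rewrite in_itv/= lerBrDr ltW.
  by move=> [n _ /=]; rewrite in_itv/= => /le_lt_trans; apply; rewrite gtrBl.
apply: nondecreasing_bigcup_measure_le => [n|n m nm|n].
- exact: measurable_itv.
- apply/subsetPset; apply: subset_itvl.
  by rewrite bnd_simp lerD2l lerN2 lef_pV2 ?posrE// ler_nat ltnS.
- have ccdf_gt : c%:E < ccdf Y (p - n.+1%:R^-1).
    rewrite ltNge; apply/negP => /(ge_inf infS.2).
    by rewrite -/p lerBrDr gerDl invr_le0 lern0.
  change (cdf Y (p - n.+1%:R^-1)%R <= (1 - c)%:E); rewrite cdf_1_ccdf.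
  have : ccdf Y (p - n.+1%:R^-1)%R \is a fin_num by exact: fin_num_measure.
  move: ccdf_gt; case: (ccdf Y _) => // q; rewrite lte_fin -EFinB lee_fin; lra.
Qed.

Lemma exists_quantile (b eps : R) : (0 < eps < 1)%R ->
  distribution P Y `[b, +oo[ = 1 ->
  exists p, [/\ (b <= p)%R, ccdf Y p <= (1 - eps)%:E
              & distribution P Y `]-oo, p[ <= eps%:E].
Proof.
move=> /andP[eps0 eps1] Yb; set S := ccdf_le (1 - eps).
have S_lb : lbound S b.
  move=> x Sx; rewrite leNgt; apply/negP => xb.
  have : distribution P Y `[b, +oo[ <= ccdf Y x.
    by apply: le_measure; rewrite ?inE//; apply: subset_itvr; rewrite bnd_simp.
  rewrite Yb => /le_trans/(_ Sx); rewrite lee_fin; lra.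
have S_inf : has_inf S.
  split; last by exists b.
  have /(_ [set y | y < (1 - eps)%:E]) [] := cvg_ccdfy0 Y.
    by apply: open_ereal_lt'; rewrite lte_fin subr_gt0.
  by move=> M [_ HM]; exists (M + 1)%R; apply/ltW/HM; rewrite ltrDl.
exists (inf S); split.
- exact: lb_le_inf S_inf.1 S_lb.
- exact: ccdf_le_inf S_inf.
- by have := distribution_lt_inf_ccdf_le S_inf; rewrite subKr.
Qed.

End quantile.

Section EVaR_bound.
Context d (Omega : measurableType d) (R : realType) (P : probability Omega R).
Variable Y : {RV P >-> R}.

Let measurable_expR_scale (t : R) :
  measurable_fun setT (fun w => expR (t^-1 * - Y w)).
Proof.
by apply: measurableT_comp => //; apply: measurable_funM => //; apply: measurableT_comp.
Qed.

Lemma integral_expR_le (a eps p t : R) : 0 < t -> - a <= p ->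
  distribution P Y `[- a, +oo[ = 1%E -> (distribution P Y `]-oo, p[ <= eps%:E)%E ->
  (\int[P]_w (expR (t^-1 * - Y w))%:E <=
   ((1 - eps) * expR (t^-1 * - p) + eps * expR (t^-1 * a))%:E)%E.
Proof.
move=> t0 ap Ya Yp; set A := Y @^-1` `]-oo, p[.
have mA : measurable A by exact: measurable_funPTI.
set e0 := expR (t^-1 * - p); set e1 := expR (t^-1 * a).
have e10 : 0 <= e1 - e0 by rewrite subr_ge0 ler_expR ler_pM2l ?invr_gt0// lerNl.
have Y_ge : {ae P, forall w, - a <= Y w}.
  have := probability1_ae (measurable_funPTI Y (measurable_itv `[- a, +oo[)) Ya.
  by apply: filterS => w /=; rewrite in_itv /= andbT.
have step_ae : {ae P, forall w, setT w ->
    (expR (t^-1 * - Y w))%:E <= (e0 + (e1 - e0) * \1_A w)%:E}%E.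
  apply: filterS Y_ge => w Yw _; rewrite lee_fin indicE.
  have [Aw|nAw] := boolP (w \in A); rewrite /= ?mulr1 ?mulr0 ?addr0 ?subrKC.
    by rewrite ler_expR ler_pM2l ?invr_gt0// lerNl.
  rewrite ler_expR ler_pM2l ?invr_gt0// lerN2 leNgt; apply/negP => Ywp.
  by move: nAw; rewrite notin_setE; apply; rewrite /A /= in_itv /= Ywp.
apply: (@le_trans _ _ (\int[P]_w (e0 + (e1 - e0) * \1_A w)%:E)%E).
  apply: ae_ge0_le_integral step_ae => //.
  - exact/measurable_EFinP.
  - by move=> w _; rewrite lee_fin addr_ge0 ?expR_ge0 ?mulr_ge0.
  - apply/measurable_EFinP; apply: measurable_funD => //.
    by apply: measurable_funM => //; exact: measurable_indic.
have mI : measurable_fun setT (fun w => (\1_A w)%:E : \bar R).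
  by apply/measurable_EFinP; exact: measurable_indic.
under eq_integral do rewrite EFinD EFinM.
rewrite ge0_integralD//; last 3 first.
- by move=> w _; rewrite lee_fin expR_ge0.
- by move=> w _; rewrite -EFinM lee_fin mulr_ge0.
- exact: emeasurable_funM.
rewrite integral_cst//= probability_setT mule1 ge0_integralZl_EFin//.
rewrite integral_indic// setIT.
apply: le_trans (leeD2l _ (lee_wpmul2l _ Yp)) _; first by rewrite lee_fin.
by rewrite -EFinM -EFinD lee_fin; lra.
Qed.

Lemma EVaR_le_Lfun_mix (alpha a eps p x mu t : R) : 0 < alpha -> eps <= 1 ->
  0 < t -> - a <= p -> distribution P Y `[- a, +oo[ = 1%E ->
  (distribution P Y `]-oo, p[ <= eps%:E)%E -> - p <= x ->
  (EVaR P alpha (fun w => (- Y w)%R) <=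
   (Defs.Lfun alpha x mu t * (1 - eps) + ub alpha a mu t * eps)%:E)%E.
Proof.
move=> alpha0 eps1 t0 ap Ya Yp px.
apply: le_trans (ereal_inf_lbound _) _.
  by exists t^-1 => //; rewrite /= in_itv /= andbT invr_gt0.
rewrite lee_fin invrK.
have := integral_expR_le t0 ap Ya Yp.
have := probability_integral_gt0 P (measurable_expR_scale t) (fun w => expR_gt0 _).
case: (\int[P]_w _)%E => // J; rewrite lte_fin lee_fin => J0 leJ.
apply: ln_le_Lfun_mix => //; apply: le_trans leJ _.
by rewrite lerD2r ler_wpM2l ?subr_ge0// ler_expR ler_pM2l ?invr_gt0.
Qed.

Lemma EVaR_le_rstar_at (alpha a eps p x : R) : 0 < alpha -> eps <= 1 ->
  - a <= p -> distribution P Y `[- a, +oo[ = 1%E ->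
  (distribution P Y `]-oo, p[ <= eps%:E)%E -> - p <= x ->
  (EVaR P alpha (fun w => (- Y w)%R) <= rstar_at alpha a eps x)%E.
Proof.
move=> alpha0 eps1 ap Ya Yp px; apply: le_ereal_inf_tmp => _ [mu [t [t0 ->]]].
exact: EVaR_le_Lfun_mix alpha0 eps1 t0 ap Ya Yp px.
Qed.

Lemma EVaR_le_rstar_at1 (alpha a x : R) : 0 < alpha ->
  distribution P Y `[- a, +oo[ = 1%E ->
  (EVaR P alpha (fun w => (- Y w)%R) <= rstar_at alpha a 1 x)%E.
Proof.
move=> alpha0 Ya; apply: (EVaR_le_rstar_at (p := Num.max (- a) (- x))) => //.
- by rewrite le_max lexx.
- exact: probability_le1.
- by rewrite lerNl le_max lexx orbT.
Qed.

End EVaR_bound.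

Lemma iid_bigcup_le_ge d (Omega : measurableType d) (R : realType)
    (P : probability Omega R) (Y : {RV P >-> R}) N (X : 'I_N -> {RV P >-> R})
    (p c : R) :
  (forall k, same_law P (X k) Y) ->
  mutually_independent P (fun k => (X k : Omega -> R)) ->
  (ccdf Y p <= c%:E)%E ->
  ((1 - c ^+ N)%:E <= P (\bigcup_(k in setT) X k @^-1` `]-oo, p]))%E.
Proof.
move=> XY indepX Yp.
have -> : \bigcup_(k in setT) X k @^-1` `]-oo, p] =
          ~` \bigcap_(k in setT) X k @^-1` `]p, +oo[.
  rewrite setC_bigcap; apply: eq_bigcupr => k _; apply/seteqP; split=> w /=;
    by rewrite !in_itv /= andbT leNgt => /negP.
rewrite probability_setC; last first.
  by apply: fin_bigcap_measurable => // k _; exact: measurable_funPTI.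
rewrite indepX => [|k]; last exact: measurable_itv.
rewrite (eq_bigr (fun=> ccdf Y p)); last by move=> k _; exact: XY.
have : (0 <= ccdf Y p)%E by exact: measure_ge0.
have : ccdf Y p \is a fin_num by exact: fin_num_measure.
move: Yp; case: (ccdf Y p) => // q qc _ q0.
rewrite prodEFin prodr_const card_ord -EFinB lee_fin lerD2l lerN2.
move: qc q0; rewrite !lee_fin => qc q0.
by apply: lerXn2r; rewrite ?nnegrE// (le_trans q0 qc).
Qed.

Theorem corollary6 (R : realType) (d : measure_display) (Omega : measurableType d)
  (P : probability Omega R) (Rob : {RV P >-> R}) (a alpha eps : R) (N : nat)
  (X : 'I_N -> {RV P >-> R}) :
  0 < a ->
  P [set w | - Rob w <= a] = 1%E ->
  0 < alpha <= 1 ->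
  0 <= eps <= 1 ->
  (forall k, same_law P (X k) Rob) ->
  mutually_independent P (fun k => (X k : Omega -> R)) ->
  ((1 - (1 - eps) ^+ N)%:E <=
   P [set w | (EVaR P alpha (fun w' => (- Rob w')%R) <=
               rstarE alpha a eps (fun k => X k w))%E])%E.
Proof.
move=> _ Pa /andP[alpha0 _] /andP[eps0 eps1] XY indepX.
have Ya : distribution P Rob `[- a, +oo[ = 1%E.
  rewrite -Pa; congr (P _).
  by apply/seteqP; split=> w /=; rewrite in_itv /= andbT lerNl.
case: N X XY indepX => [|n] X XY indepX; first by rewrite expr0 subrr measure_ge0.
rewrite le_rstarE_bigcup//; set V := [set y | _].
have [eps_eq1|eps_neq1] := eqVneq eps 1.
  rewrite eps_eq1 subrr expr0n /= subr0.
  rewrite (_ : \bigcup_(k in _) _ = setT) ?probability_setT//.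
  apply/seteqP; split=> // w _; exists ord0 => //=.
  by rewrite /V eps_eq1; exact: EVaR_le_rstar_at1.
have [->|eps_neq0] := eqVneq eps 0; first by rewrite subr0 expr1n subrr measure_ge0.
have eps01 : 0 < eps < 1 by rewrite !lt_def eps_neq0 eps0 eq_sym eps_neq1 eps1.
have [p [ap Y_gt_p Y_lt_p]] := exists_quantile eps01 Ya.
apply: le_trans (iid_bigcup_le_ge XY indepX Y_gt_p) _.
have mV : measurable V by exact: measurable_le_rstar_at.
apply: le_measure; rewrite ?inE.
- by apply: fin_bigcup_measurable => // k _; exact: measurable_funPTI.
- by apply: fin_bigcup_measurable => // k _; exact: measurable_funPTI.
apply: subset_bigcup => k _; apply: preimage_subset => y; rewrite /= in_itv /= => yp.
by apply: EVaR_le_rstar_at ap Ya Y_lt_p _; rewrite ?lerN2.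
Qed.
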